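(* Under Assumption (I), a function $\psi\in C_+(\mathbb S^{n-1})$ is invariant for the ODE $r_t=r_0+\int_0^t\bar b(r_s)ds$ if and only if $\bar b(\psi)=n^{-1}\psi/\mathrm{Leb}(\psi)$.
   Context: $n\ge2$; $\mathbb S^{n-1}$ with surface measure $\sigma$, $\omega_n=\sigma(\mathbb S^{n-1})$; $C_+(\mathbb S^{n-1})$ strictly positive continuous functions; $\mathrm{Leb}(r):=n^{-1}\int r^nd\sigma$. Rules: $\mathcal D(F)\subset C_+\times\mathbb R^n$ open with nonempty sections, measurable $F:\mathcal D(F)\to C_+$ with $F(r,x,\cdot)$ a probability density w.r.t. $\sigma$, measurable $H:C_+\times\mathbb S^{n-1}\to\mathbb R^n$ with $(r',H(r,\xi))\in\mathcal D(F)$ for $r'\ge r$, a.e. $\xi$. $y_{r,x}:=\omega_n\int r^{n-1}F(r,x,\cdot)d\sigma$, $b(r,x):=\omega_nF(r,x,\cdot)/y_{r,x}$. For fixed $r$, $(x^{1,r}_t)$ is the rate-one jump process on $\mathbb R^n$ that at each jump from $x$ moves to $H(r,\xi)$, with $\xi$ of density $F(r,x,\cdot)$; it is assumed to have a unique invariant probability measure $\nu_r$, and $\bar b(r):=\int b(r,x)d\nu_r(x)$. Assumption (I): for every $c>0$, $(r,x)\in\mathcal D(F)\Rightarrow(cr,cx)\in\mathcal D(F)$, $F(r,x,\cdot)=F(cr,cx,\cdot)$, $cH(r,\cdot)=H(cr,\cdot)$. $\psi\in C_+$ is invariant for the ODE if the solution started at $r_0=\psi$ is $r_t=(1+t/\mathrm{Leb}(\psi))^{1/n}\psi$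 for all $t\ge0$. *)

From HB Require Import structures.
From mathcomp Require Import all_boot all_order all_algebra.
From mathcomp Require Import all_classical all_reals all_analysis.
Set Implicit Arguments. Unset Strict Implicit. Unset Printing Implicit Defensive.
Import Order.TTheory GRing.Theory Num.Theory.
Import numFieldNormedType.Exports.
Local Open Scope classical_set_scope.
Local Open Scope ring_scope.

Section Defs.
Variables (R : realType) (n : nat).

Definition Rn : Type := g_sigma_algebraType (@open 'rV[R]_n).

Definition enorm (x : 'rV[R]_n) : R := Num.sqrt (\sum_(i < n) x ord0 i ^+ 2).
Definition sphere : set 'rV[R]_n := [set x | enorm x = 1].
(* the sphere as a type, with the subspace (initial) topology *)
Definition Sph : Type := set_type sphere.

Definition sext (g : Sph -> \bar R) (y : 'rV[R]_n) : \bar R :=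
  match pselect (y \in sphere) with
  | left h => g (exist _ y h)
  | right _ => 0%E
  end.

(* coordinate update and iterated (Tonelli) Lebesgue integral on R^n *)
Definition setc (x : 'rV[R]_n) (k : nat) (t : R) : 'rV[R]_n :=
  \row_j (if (j : nat) == k then t else x ord0 j).
Fixpoint iint (k : nat) (f : 'rV[R]_n -> \bar R) (x : 'rV[R]_n) : \bar R :=
  if k is k'.+1 then (\int[@lebesgue_measure R]_t iint k' f (setc x k' t))%E
  else f x.
Definition lebn (f : 'rV[R]_n -> \bar R) : \bar R := iint n f 0.

(* integral w.r.t. the surface measure sigma on S^{n-1}, defined through the
   polar-coordinates identity  int_S g dsigma = n * int_{0<|x|<=1} g(x/|x|) dx *)
Definition sint (g : Sph -> \bar R) : \bar R :=
  (n%:R%:E * lebn (fun x => if ((0 < enorm x) && (enorm x <= 1))%R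
                            then sext g (((enorm x)^-1)%R *: x) else 0%E))%E.

Definition omega : R := fine (sint (fun _ => 1%E)).

Definition snull (N : set Sph) : Prop :=
  measurable ((@set_val _ sphere) @` N : set Rn) /\
  sint (fun xi => (\1_N xi)%:E) = 0%E.
Definition sae (P : Sph -> Prop) : Prop :=
  exists N, snull N /\ forall xi, ~ N xi -> P xi.

Definition Cplus (r : Sph -> R) : Prop :=
  continuous r /\ forall xi, 0 < r xi.

Definition Leb (r : Sph -> R) : R :=
  fine ((n%:R^-1)%:E * sint (fun xi => (r xi ^+ n)%:E))%E.

Variables (D : (Sph -> R) -> 'rV[R]_n -> Prop)
          (F : (Sph -> R) -> 'rV[R]_n -> Sph -> R)
          (H : (Sph -> R) -> Sph -> 'rV[R]_n).

Definition Hext (r : Sph -> R) (y : Rn) : Rn :=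
  match pselect (y \in sphere) with
  | left h => H r (exist _ y h)
  | right _ => 0
  end.
Definition Fext (r : Sph -> R) (p : Rn * Rn) : R :=
  fine (sext (fun xi => (F r p.1 xi)%:E) p.2).

Definition rules : Prop :=
  (forall r x, D r x -> Cplus r) /\
  (forall r x, D r x -> exists2 e : R, 0 < e & forall r' x', Cplus r' ->
      (forall xi, `|r' xi - r xi| < e) -> `|x' - x| < e -> D r' x') /\
  (forall r, Cplus r -> exists x, D r x) /\
  (forall r x, D r x -> Cplus (F r x) /\ sint (fun xi => (F r x xi)%:E) = 1%E) /\
  (forall r, Cplus r -> measurable_fun [set p : Rn * Rn | D r p.1] (Fext r)) /\
  (forall r, Cplus r -> measurable_fun setT (Hext r)) /\
  (forall r r', Cplus r -> Cplus r' -> (forall xi, r xi <= r' xi) ->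
      sae (fun xi => D r' (H r xi))).

Definition yv (r : Sph -> R) (x : 'rV[R]_n) : R :=
  omega * fine (sint (fun xi => (r xi ^+ n.-1 * F r x xi)%:E)).
Definition b (r : Sph -> R) (x : 'rV[R]_n) (xi : Sph) : R :=
  omega * F r x xi / yv r x.

(* transition kernel of the jump chain of x^{1,r}: from x jump to H(r,xi),
   xi with density F(r,x,.) *)
Definition K (r : Sph -> R) (x : 'rV[R]_n) (A : set Rn) : \bar R :=
  sint (fun xi => (F r x xi * \1_A (H r xi : Rn))%:E).

(* invariant probability of the rate-one jump process x^{1,r}
   (generator L f(x) = int (f(H(r,xi)) - f(x)) F(r,x,xi) dsigma(xi)) *)
Definition invariant_prob (r : Sph -> R) (mu : probability Rn R) : Prop :=
  forall A : set Rn, measurable A ->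
    mu A = (\int[mu]_(x in [set x : Rn | D r x]) K r x A)%E.

Definition bbar (nu : (Sph -> R) -> probability Rn R) (r : Sph -> R) (xi : Sph)
  : \bar R :=
  (\int[nu r]_(x in [set x : Rn | D r x]) (b r x xi)%:E)%E.

Definition assumptionI : Prop :=
  forall c : R, 0 < c ->
    (forall r x, D r x -> D (fun xi => c * r xi) (c *: x)) /\
    (forall r x, D r x -> forall xi, F r x xi = F (fun xi => c * r xi) (c *: x) xi) /\
    (forall r, Cplus r -> forall xi, c *: H r xi = H (fun xi => c * r xi) xi).

Definition is_solution (bb : (Sph -> R) -> Sph -> \bar R) (psi : Sph -> R)
    (rt : R -> Sph -> R) : Prop :=
  rt 0 = psi /\ (forall t, 0 <= t -> Cplus (rt t)) /\
  forall t, 0 <= t -> forall xi,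
    ((rt t xi)%:E = (psi xi)%:E +
       \int[@lebesgue_measure R]_(s in [set s : R | (0 <= s <= t)%R]) bb (rt s) xi)%E.

Definition invariant_ode (bb : (Sph -> R) -> Sph -> \bar R) (psi : Sph -> R) : Prop :=
  is_solution bb psi (fun t xi => powR (1 + t / Leb psi) (n%:R^-1) * psi xi).

End Defs.

From HB Require Import structures.
From mathcomp Require Import all_boot all_order all_algebra.
From mathcomp Require Import all_classical all_reals all_analysis.
From mathcomp Require Import measurable_realfun ring.
Import Order.TTheory GRing.Theory Num.Theory.
Import numFieldNormedType.Exports.
Local Open Scope classical_set_scope.
Local Open Scope ring_scope.
Import HBNNSimple.

(* Assumption (I) makes the model homogeneous: the image of nu_psi under
   x |-> c x is invariant for the rules at c psi, hence equals nu_(c psi) by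
   uniqueness, and since y_(cr,cx) = c^(n-1) y_(r,x) this gives
   bbar(c psi) = c^(1-n) bbar(psi).  Along r_t = c_t psi with
   c_t = (1 + t / Leb psi)^(1/n) the ODE therefore reads
   c_t psi = psi + (int_0^t c_s^(1-n) ds) bbar(psi), and
   int_0^t c_s^(1-n) ds = n Leb(psi) (c_t - 1); so it holds for all t exactly
   when bbar(psi) = psi / (n Leb psi). *)

(* bbar is not known to be measurable, so these facts about nonnegative
   integrals are proved from the supremum over simple functions. *)
Section ge0_integral_nonmeasurable.
Local Open Scope ereal_scope.
Context d (T : measurableType d) (R : realType) (mu : {measure set T -> \bar R}).

Lemma ge0_le_integral_nonmeas (D : set T) (f g : T -> \bar R) :
  (forall x, D x -> 0 <= f x) -> (forall x, D x -> f x <= g x) ->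
  \int[mu]_(x in D) f x <= \int[mu]_(x in D) g x.
Proof.
move=> f0 fg.
have g0 x : D x -> 0 <= g x by move=> Dx; exact: le_trans (f0 x Dx) (fg x Dx).
rewrite (ge0_integralE mu f0) (ge0_integralE mu g0) /=.
apply: ereal_sup_le => _ [h hf <-]; exists h => //= x.
apply: le_trans (hf x) _; rewrite /patch; case: ifPn => // /set_mem Dx; exact: fg.
Qed.

Lemma gt0_integralZl_le (D : set T) (f : T -> \bar R) (k : R) : (0 < k)%R ->
  (forall x, D x -> 0 <= f x) ->
  \int[mu]_(x in D) (k%:E * f x) <= k%:E * \int[mu]_(x in D) f x.
Proof.
move=> k0 f0.
have kf0 x : D x -> 0 <= k%:E * f x.
  by move=> Dx; apply: mule_ge0; [rewrite lee_fin ltW | exact: f0].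
have kK (e : \bar R) : k%:E * (k^-1%:E * e) = e.
  by rewrite muleA -EFinM divff ?gt_eqF ?mul1e.
rewrite (ge0_integralE mu kf0) /=.
apply: ge_ereal_sup => _ [h hf <-] /=.
have hk0 x : setT x -> 0 <= (k^-1 * h x)%:E.
  by move=> _; rewrite lee_fin; apply: mulr_ge0; [rewrite invr_ge0 ltW | exact: fun_ge0].
have -> : sintegral mu h = \int[mu]_(x in setT) (h x)%:E.
  by rewrite integral_nnsfun ?patch_setT.
rewrite (eq_integral (fun x => k%:E * (k^-1 * h x)%:E)); last by move=> x _; rewrite EFinM kK.
rewrite (ge0_integralZl_EFin _ _ hk0) ?(ltW k0) //; last exact/measurable_EFinP/measurable_funM.
rewrite lee_pmul2l ?lte_fin // [leRHS]integral_mkcond.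
apply: ge0_le_integral_nonmeas => x _; first exact: hk0.
rewrite -(@lee_pmul2l _ k%:E) ?lte_fin // EFinM kK.
by have := hf x; rewrite /patch; case: ifPn => // _; rewrite mule0.
Qed.

Lemma gt0_integralZl_nonmeas (D : set T) (f : T -> \bar R) (k : R) : (0 < k)%R ->
  (forall x, D x -> 0 <= f x) ->
  \int[mu]_(x in D) (k%:E * f x) = k%:E * \int[mu]_(x in D) f x.
Proof.
move=> k0 f0; apply/eqP; rewrite eq_le gt0_integralZl_le //=.
have ki0 : (0 < k^-1)%R by rewrite invr_gt0.
have kf0 x : D x -> 0 <= k%:E * f x.
  by move=> Dx; apply: mule_ge0; [rewrite lee_fin ltW | exact: f0].
have := @gt0_integralZl_le _ _ k^-1 ki0 kf0.
under eq_integral do rewrite muleA -EFinM mulVf ?gt_eqF // mul1e.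
by rewrite -(@lee_pmul2l _ k%:E) ?lte_fin // muleA -EFinM divff ?gt_eqF ?mul1e.
Qed.

End ge0_integral_nonmeasurable.

Section ge0_integral_pushforward_nonmeasurable.
Local Open Scope ereal_scope.

Lemma ge0_le_integral_pushforward d d' (T : measurableType d) (Y : measurableType d')
    (R : realType) (mu : {measure set T -> \bar R})
    (nu : {measure set Y -> \bar R}) (phi : T -> Y) :
  measurable_fun setT phi -> (forall A, measurable A -> nu A = mu (phi @^-1` A)) ->
  forall (D : set Y) (f : Y -> \bar R), (forall y, D y -> 0 <= f y) ->
  \int[nu]_(y in D) f y <= \int[mu]_(x in phi @^-1` D) f (phi x).
Proof.
move=> mphi nuE D f f0.
rewrite (ge0_integralE nu f0) /=.
apply: ge_ereal_sup => _ [h hf <-] /=.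
have mh : measurable_fun setT (EFin \o h) by exact/measurable_EFinP.
have h0 : {in setT, forall y, 0 <= (EFin \o h) y} by move=> y _; rewrite /= lee_fin.
have := ge0_integral_pushforward mphi mu measurableT mh h0.
rewrite (eq_measure_integral nu) => [hE|A mA _]; last by rewrite nuE.
have -> : sintegral nu h = \int[nu]_(y in setT) (h y)%:E.
  by rewrite integral_nnsfun ?patch_setT.
rewrite hE preimage_setT [leRHS]integral_mkcond.
apply: ge0_le_integral_nonmeas => x _ /=; first by rewrite lee_fin.
by have := hf (phi x); rewrite /patch /=; case: ifPn.
Qed.

Lemma ge0_integral_pushforward_bij d d' (T : measurableType d)
    (Y : measurableType d') (R : realType) (mu : {measure set T -> \bar R})
    (nu : {measure set Y -> \bar R}) (phi : T -> Y) (phi' : Y -> T) :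
  measurable_fun setT phi -> measurable_fun setT phi' ->
  cancel phi phi' -> cancel phi' phi ->
  (forall A, measurable A -> nu A = mu (phi @^-1` A)) ->
  forall (D : set Y) (f : Y -> \bar R), (forall y, D y -> 0 <= f y) ->
  \int[nu]_(y in D) f y = \int[mu]_(x in phi @^-1` D) f (phi x).
Proof.
move=> mphi mphi' phiK phi'K nuE D f f0.
apply/eqP; rewrite eq_le ge0_le_integral_pushforward //=.
have muE A : measurable A -> mu A = nu (phi' @^-1` A).
  move=> mA; rewrite nuE; last by rewrite -[_ @^-1` _]setTI; exact: mphi'.
  by congr (mu _); apply/seteqP; split => x /=; rewrite phiK.
have := @ge0_le_integral_pushforward _ _ _ _ _ nu mu phi' mphi' muE
  (phi @^-1` D) (fun x => f (phi x)) (fun x Dx => f0 (phi x) Dx).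
have -> : phi' @^-1` (phi @^-1` D) = D by apply/seteqP; split => y /=; rewrite phi'K.
by under [X in _ <= X -> _]eq_integral do rewrite phi'K.
Qed.

End ge0_integral_pushforward_nonmeasurable.

Section sphere_integral.
Context (R : realType) (n : nat).
Local Open Scope ereal_scope.

Lemma iint_ge0 k (f : 'rV[R]_n -> \bar R) x : (forall y, 0 <= f y) -> 0 <= iint k f x.
Proof.
move=> f0; elim: k x => [|k IH] x /=; first exact: f0.
by apply: integral_ge0 => t _; exact: IH.
Qed.

Lemma iintZl k (f : 'rV[R]_n -> \bar R) x (c : R) : (0 < c)%R ->
  (forall y, 0 <= f y) -> iint k (fun y => c%:E * f y) x = c%:E * iint k f x.
Proof.
move=> c0 f0; elim: k x => [|k IH] x //=.
under eq_integral do rewrite IH.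
by rewrite gt0_integralZl_nonmeas // => t _; exact: iint_ge0.
Qed.

Lemma sext_ge0 (g : Sph R n -> \bar R) y : (forall xi, 0 <= g xi) -> 0 <= sext g y.
Proof. by move=> g0; rewrite /sext; case: pselect. Qed.

Lemma sint_ge0 (g : Sph R n -> \bar R) : (forall xi, 0 <= g xi) -> 0 <= sint g.
Proof.
move=> g0; apply: mule_ge0; first by rewrite lee_fin.
by apply: iint_ge0 => y; case: ifPn => // _; exact: sext_ge0.
Qed.

Lemma sintZl (g : Sph R n -> \bar R) (c : R) : (0 < c)%R ->
  (forall xi, 0 <= g xi) -> sint (fun xi => c%:E * g xi) = c%:E * sint g.
Proof.
move=> c0 g0; rewrite /sint /lebn muleCA; congr (_ * _).
rewrite -iintZl //; last by move=> y; case: ifPn => // _; exact: sext_ge0.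
congr (iint _ _ _); apply: funext => y; case: ifPn => _; last by rewrite mule0.
by rewrite /sext; case: pselect => //; rewrite mule0.
Qed.

Lemma gt0_fineMl (c : R) (e : \bar R) : (0 < c)%R -> fine (c%:E * e) = (c * fine e)%R.
Proof.
by move=> c0; case: e => [r||] //=; rewrite ?gt0_muley ?gt0_muleNy ?lte_fin ?mulr0.
Qed.

Lemma omega_ge0 : (0 <= omega R n)%R.
Proof. exact/fine_ge0/sint_ge0. Qed.

Lemma Leb_ge0 (r : Sph R n -> R) : (forall xi, 0 <= r xi)%R -> (0 <= Leb r)%R.
Proof.
move=> r0; apply/fine_ge0/mule_ge0; first by rewrite lee_fin invr_ge0.
by apply: sint_ge0 => xi; rewrite lee_fin exprn_ge0.
Qed.

End sphere_integral.

Lemma Cplus_scale (R : realType) (n : nat) (r : Sph R n -> R) (c : R) :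
  0 < c -> Cplus r -> Cplus (fun xi => c * r xi).
Proof.
move=> c0 [rc r0]; split=> [xi|xi]; last by rewrite mulr_gt0.
by apply: continuousM; [exact: cst_continuous | exact: rc].
Qed.

Section drift_scaling.
Context (R : realType) (n : nat) (F : (Sph R n -> R) -> 'rV[R]_n -> Sph R n -> R).
Variables (r : Sph R n -> R) (x : 'rV[R]_n).
Hypotheses (r_gt0 : forall xi, 0 < r xi) (F_ge0 : forall xi, 0 <= F r x xi).

Lemma yv_ge0 : 0 <= yv F r x.
Proof.
apply: mulr_ge0; first exact: omega_ge0.
apply/fine_ge0/sint_ge0 => xi.
by rewrite lee_fin; apply: mulr_ge0 => //; rewrite exprn_ge0 // ltW.
Qed.

Lemma b_ge0 xi : 0 <= b F r x xi.
Proof. by apply: divr_ge0; [apply: mulr_ge0; [exact: omega_ge0|] | exact: yv_ge0]. Qed.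

Variable (c : R).
Hypotheses (c_gt0 : 0 < c)
  (F_scale : forall xi, F (fun xi => c * r xi) (c *: x) xi = F r x xi).

Lemma yv_scale : yv F (fun xi => c * r xi) (c *: x) = c ^+ n.-1 * yv F r x.
Proof.
rewrite /yv (_ : (fun xi => _) =
    (fun xi => (c ^+ n.-1)%:E * (r xi ^+ n.-1 * F r x xi)%:E)%E); last first.
  by apply: funext => xi; rewrite F_scale exprMn -EFinM mulrA.
have cn_gt0 : 0 < c ^+ n.-1 by rewrite exprn_gt0.
rewrite sintZl //; last first.
  by move=> xi; rewrite lee_fin; apply: mulr_ge0 => //; rewrite exprn_ge0 // ltW.
by rewrite gt0_fineMl // mulrCA.
Qed.

Lemma b_scale xi : b F (fun xi => c * r xi) (c *: x) xi = (c ^+ n.-1)^-1 * b F r x xi.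
Proof. by rewrite /b F_scale yv_scale invfM mulrCA mulrA. Qed.

End drift_scaling.

Section scaling_map.
Context {R : realType} {n : nat}.

Lemma continuous_measurable_Rn (f : 'rV[R]_n -> 'rV[R]_n) :
  continuous f -> measurable_fun setT (f : Rn R n -> Rn R n).
Proof.
move=> fc; apply: (@measurability _ _ _ _ setT (f : Rn R n -> Rn R n) (@open 'rV[R]_n)).
  by [].
move=> _ [A oA <-].
by apply: sub_gen_smallest; rewrite setTI; exact: (proj1 (continuousP _) fc).
Qed.

Definition scale_Rn (c : R) (x : Rn R n) : Rn R n := c *: (x : 'rV[R]_n).

Lemma measurable_scale_Rn c : measurable_fun setT (scale_Rn c).
Proof. by apply: continuous_measurable_Rn; exact: scaler_continuous. Qed.

HB.instance Definition _ (c : R) :=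
  isMeasurableFun.Build _ _ (Rn R n) (Rn R n) (scale_Rn c) (measurable_scale_Rn c).

Lemma scale_RnK c : c != 0 -> cancel (scale_Rn c) (scale_Rn c^-1).
Proof. by move=> c0 x; rewrite /scale_Rn scalerA mulVf ?scale1r. Qed.

Lemma scale_RnVK c : c != 0 -> cancel (scale_Rn c^-1) (scale_Rn c).
Proof. by move=> c0 x; rewrite /scale_Rn scalerA mulfV ?scale1r. Qed.

Definition scale_prob (mu : probability (Rn R n) R) (c : R) : probability (Rn R n) R :=
  distribution mu (scale_Rn c).

Lemma ge0_integral_scale_prob (mu : probability (Rn R n) R) (c : R) (D : set (Rn R n))
    (f : Rn R n -> \bar R) : c != 0 -> (forall x, D x -> 0 <= f x)%E ->
  (\int[scale_prob mu c]_(x in D) f x = \int[mu]_(x in scale_Rn c @^-1` D) f (c *: x))%E.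
Proof.
move=> c0 f0.
exact: (@ge0_integral_pushforward_bij _ _ _ _ _ mu (scale_prob mu c) _ _
  (measurable_scale_Rn c) (measurable_scale_Rn c^-1) (scale_RnK _ c0) (scale_RnVK _ c0)
  (fun _ _ => erefl) D f f0).
Qed.

End scaling_map.

Section bbar_homogeneity.
Context {R : realType} {n : nat} {D : (Sph R n -> R) -> 'rV[R]_n -> Prop}
  {F : (Sph R n -> R) -> 'rV[R]_n -> Sph R n -> R}
  {H : (Sph R n -> R) -> Sph R n -> 'rV[R]_n}
  {nu : (Sph R n -> R) -> probability (Rn R n) R}.
Hypothesis rulesDFH : rules D F H.
Hypothesis nu_invariant : forall r, Cplus r -> invariant_prob D F H r (nu r).
Hypothesis nu_unique : forall r, Cplus r -> forall mu : probability (Rn R n) R,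
  invariant_prob D F H r mu -> forall A, measurable A -> mu A = nu r A.
Hypothesis scale_invariance : assumptionI D F H.

Lemma domain_gt0 r x xi : D r x -> 0 < r xi.
Proof. by case: rulesDFH => DC _ /DC[_]. Qed.

Lemma density_ge0 r x xi : D r x -> 0 <= F r x xi.
Proof. by case: rulesDFH => _ [_ [_ [FC _]]] /FC[[_ /(_ xi) /ltW]]. Qed.

Lemma drift_ge0 r x xi : D r x -> 0 <= b F r x xi.
Proof. by move=> Dx; apply: b_ge0 => xi'; [exact: domain_gt0 Dx | exact: density_ge0 Dx]. Qed.

Lemma bbar_ge0 r xi : (0 <= bbar D F nu r xi)%E.
Proof. by apply: integral_ge0 => x /drift_ge0; rewrite lee_fin. Qed.

Lemma kernel_ge0 r x A : D r x -> (0 <= K F H r x A)%E.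
Proof.
move=> Dx; apply: sint_ge0 => xi; rewrite lee_fin.
apply: mulr_ge0; first exact: density_ge0 Dx.
by rewrite /indic; case: (_ \in _).
Qed.

Variables (psi : Sph R n -> R) (c : R).
Hypotheses (Cpsi : Cplus psi) (c_gt0 : 0 < c).

Lemma scale_Rn_preimage_domain :
  scale_Rn c @^-1` [set x : Rn R n | D (fun xi => c * psi xi) x] =
  [set x : Rn R n | D psi x].
Proof.
have cV_gt0 : 0 < c^-1 by rewrite invr_gt0.
apply/seteqP; split=> x /=; last by move=> Dx; exact: (scale_invariance _ c_gt0).1 _ _ Dx.
move=> /((scale_invariance _ cV_gt0).1); rewrite scalerA mulVf ?gt_eqF // scale1r.
by under eq_fun do rewrite mulrA mulVf ?gt_eqF // mul1r.
Qed.

Lemma invariant_prob_scale :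
  invariant_prob D F H (fun xi => c * psi xi) (scale_prob (nu psi) c).
Proof.
move=> A mA; have [_ [F_scale H_scale]] := scale_invariance _ c_gt0.
have mcA : measurable (scale_Rn c @^-1` A).
  by rewrite -[_ @^-1` _]setTI; exact: measurable_scale_Rn.
rewrite [LHS](nu_invariant _ Cpsi _ mcA) ge0_integral_scale_prob ?gt_eqF //; last first.
  by move=> x; exact: kernel_ge0.
rewrite scale_Rn_preimage_domain; apply: eq_integral => x /[!inE] Dx.
by congr sint; apply: funext => xi; rewrite -(F_scale _ _ Dx) -(H_scale _ Cpsi).
Qed.

Lemma bbar_scale xi :
  bbar D F nu (fun xi => c * psi xi) xi = ((c ^+ n.-1)^-1%:E * bbar D F nu psi xi)%E.
Proof.
have [_ [F_scale _]] := scale_invariance _ c_gt0.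
rewrite /bbar (eq_measure_integral (scale_prob (nu psi) c)); last first.
  move=> A mA _; apply/esym/nu_unique => //; first exact: Cplus_scale.
  exact: invariant_prob_scale.
rewrite ge0_integral_scale_prob ?gt_eqF //; last by move=> x /drift_ge0; rewrite lee_fin.
rewrite scale_Rn_preimage_domain -gt0_integralZl_nonmeas ?invr_gt0 ?exprn_gt0 //; last first.
  by move=> x /drift_ge0; rewrite lee_fin.
apply: eq_integral => x /[!inE] Dx; rewrite -EFinM b_scale //.
- by move=> xi'; exact: domain_gt0 Dx.
- by move=> xi'; exact: density_ge0 Dx.
- by move=> xi'; rewrite -F_scale.
Qed.

End bbar_homogeneity.

Section segment_integral.
Context (R : realType).
Local Open Scope ereal_scope.

Lemma segment_itv (t : R) : [set s : R | (0 <= s <= t)%R] = `[0%R, t]%classic.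
Proof. by apply/seteqP; split => s /=; rewrite in_itv. Qed.

Lemma integral_segment_cst (t : R) (f : R -> \bar R) (k : \bar R) : (0 <= t)%R ->
  (forall s, (0 <= s <= t)%R -> f s = k) ->
  \int[lebesgue_measure]_(s in [set s : R | (0 <= s <= t)%R]) f s = k * t%:E.
Proof.
move=> t0 fk; rewrite (eq_integral (cst k)); last by move=> s /[!inE] /fk.
rewrite segment_itv integral_cst //= lebesgue_measure_itv /= lte_fin.
by case: ltgtP t0 => // [t_gt0|<-] _; rewrite ?sube0.
Qed.

End segment_integral.

Definition growth {R : realType} (L : R) (m : nat) (t : R) : R := powR (1 + t / L) m%:R^-1.

Lemma growth0 (R : realType) (L : R) m : growth L m 0 = 1.
Proof. by rewrite /growth mul0r addr0 powR1. Qed.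

Lemma growthL0 (R : realType) m (t : R) : growth 0 m t = 1.
Proof. by rewrite /growth invr0 mulr0 addr0 powR1. Qed.

Lemma growth_gt0 (R : realType) (L : R) m t : 0 <= L -> 0 <= t -> 0 < growth L m t.
Proof. by move=> L0 t0; rewrite powR_gt0 // ltr_wpDr // divr_ge0. Qed.

Lemma growth1_neq1 (R : realType) (L : R) m : 0 < L -> (0 < m)%N -> growth L m 1 != 1.
Proof.
move=> L_gt0 m_gt0; rewrite powR_eq1 !negb_or -leNgt invr_eq0 pnatr_eq0 -lt0n m_gt0.
by rewrite -subr_eq0 addrAC subrr add0r mul1r invr_eq0 gt_eqF //= addr_ge0 // invr_ge0 ltW.
Qed.

Section growth_integral.
Context (R : realType) (L : R) (m : nat).
Hypotheses (L_gt0 : 0 < L) (m_gt0 : (0 < m)%N).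
Let u (s : R) := 1 + s / L.

Let u_gt0 s : 0 <= s -> 0 < u s.
Proof. by move=> s0; rewrite ltr_wpDr // divr_ge0 // ltW. Qed.

Lemma is_derive_powR_affine q s : 0 < u s ->
  is_derive s 1 (fun s => powR (u s) q) (q * u s `^ (q - 1) / L).
Proof.
move=> us_gt0.
have du : is_derive s 1 u L^-1.
  by apply: is_derive_eq; rewrite scaler0 !add0r mul1r -[RHS]mulr1.
have dpow : derivable (@powR R ^~ q) (u s) 1 by apply: derivable_powR; rewrite in_itv /= us_gt0.
have du' : derivable u s 1 by apply: ex_derive; exact: du.
split.
  apply/derivable1_diffP/(differentiable_comp (g := @powR R ^~ q)); exact/derivable1_diffP.
rewrite -derive1E (derive1_comp du' dpow) powR_derive1 ?in_itv /= ?us_gt0 //.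
by rewrite derive1E (@derive_val _ _ _ _ _ _ _ du).
Qed.

Lemma growth_expr_pred_inv s : 0 <= s ->
  (growth L m s ^+ m.-1)^-1 = powR (u s) (m%:R^-1 - 1).
Proof.
move=> s0; rewrite /growth -/(u s) -powR_mulrn ?powR_ge0 // -powRrM -powRN.
have m0 : m%:R != 0 :> R by rewrite pnatr_eq0 -lt0n.
congr (powR _ _); move: m0; case: m m_gt0 => // k _.
by rewrite /= -natr1 => k1_neq0; field.
Qed.

Lemma integral_growth (a t : R) : 0 <= t ->
  (\int[lebesgue_measure]_(s in [set s : R | (0 <= s <= t)%R])
     (((growth L m s ^+ m.-1)^-1 * a)%:E) =
   (m%:R * L * (growth L m t - 1) * a)%:E)%E.
Proof.
move=> t0; pose p : R := m%:R^-1; have m0 : m%:R != 0 :> R by rewrite pnatr_eq0 -lt0n.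
case: (ltgtP 0 t) t0 => // [t_gt0 _|<- _]; last first.
  rewrite (@integral_segment_cst _ 0 _ ((growth L m 0 ^+ m.-1)^-1 * a)%:E) //.
    by rewrite mule0 growth0 subrr mulr0 mul0r.
  by move=> s /andP[s0 s0']; have -> : s = 0 by apply/le_anti; rewrite s0 s0'.
(* the integrand a u^(p-1) is the derivative of G = m L a u^p *)
pose G s := powR (u s) p * (m%:R * L * a).
have dG s : 0 < u s -> derivable G s 1.
  by move=> us_gt0; apply: derivableM => //; have [] := is_derive_powR_affine p _ us_gt0.
have G' s : 0 < u s -> G^`()%classic s = a * powR (u s) (p - 1).
  move=> us_gt0; rewrite /G derive1Mr; last by have [] := is_derive_powR_affine p _ us_gt0.
  rewrite derive1E (@derive_val _ _ _ _ _ _ _ (is_derive_powR_affine p _ us_gt0)) /p.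
  by field; rewrite m0 gt_eqF.
have cG s : 0 < u s -> {for s, continuous G}.
  by move=> us_gt0; apply/differentiable_continuous/derivable1_diffP/dG.
rewrite segment_itv.
transitivity (\int[lebesgue_measure]_(s in `[0%R, t]) (a * powR (u s) (p - 1))%:E)%E.
  apply: eq_integral => s /[!inE] /=; rewrite in_itv /= => /andP[s0 _].
  by rewrite growth_expr_pred_inv // mulrC.
rewrite (@continuous_FTC2 _ _ G) //.
- by rewrite /G /u mul0r addr0 powR1 -EFinB; congr EFin; rewrite /growth -/p; ring.
- apply: derivable_within_continuous => s /[!in_itv] /= /andP[s0 _].
  by apply: derivableM => //; have [] := is_derive_powR_affine (p - 1) _ (u_gt0 _ s0).
- split.
  + by move=> s /[!in_itv] /= /andP[s0 _]; apply/dG/u_gt0/ltW.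
  + exact/cvg_at_right_filter/cG/u_gt0.
  + exact/cvg_at_left_filter/cG/u_gt0/ltW.
- by move=> s /[!in_itv] /= /andP[s0 _]; apply/G'/u_gt0/ltW.
Qed.

End growth_integral.

Section homogeneous_ode.
Context (R : realType) (n : nat).
Hypothesis n_gt0 : (0 < n)%N.
Variables (bb : (Sph R n -> R) -> Sph R n -> \bar R) (psi : Sph R n -> R).
Hypotheses (Cpsi : Cplus psi) (bb_ge0 : forall xi, (0 <= bb psi xi)%E)
  (bb_scale : forall c xi, 0 < c ->
     bb (fun xi => c * psi xi) xi = ((c ^+ n.-1)^-1%:E * bb psi xi)%E).

Let Lebpsi_ge0 : 0 <= Leb psi.
Proof. by apply: Leb_ge0 => xi; apply/ltW/Cpsi.2. Qed.

Let ode_along_growth := forall t, 0 <= t -> forall xi,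
  ((growth (Leb psi) n t * psi xi)%:E = (psi xi)%:E +
    \int[lebesgue_measure]_(s in [set s : R | (0 <= s <= t)%R])
      ((growth (Leb psi) n s ^+ n.-1)^-1%:E * bb psi xi))%E.

Lemma invariant_odeE : invariant_ode bb psi <-> ode_along_growth.
Proof.
have integrandE t xi :
  (\int[lebesgue_measure]_(s in [set s : R | (0 <= s <= t)%R])
     bb (fun xi => (growth (Leb psi) n s * psi xi)%R) xi =
   \int[lebesgue_measure]_(s in [set s : R | (0 <= s <= t)%R])
     ((growth (Leb psi) n s ^+ n.-1)^-1%:E * bb psi xi))%E.
  by apply: eq_integral => s /[!inE] /andP[s0 _]; rewrite bb_scale ?growth_gt0.
change (is_solution bb psi (fun t xi => growth (Leb psi) n t * psi xi) <-> ode_along_growth).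
split=> [[_ [_ sol]] t t0 xi|ode]; first by rewrite -integrandE; exact: sol.
split; first by apply: funext => xi; rewrite growth0 mul1r.
split=> [t t0|t t0 xi]; first by apply: Cplus_scale; rewrite ?growth_gt0.
by rewrite integrandE; exact: ode.
Qed.

Lemma ode_along_growth_fin_num : ode_along_growth -> forall xi, bb psi xi \is a fin_num.
Proof.
move=> ode xi; have := ode 1 ler01 xi; move: (bb_ge0 xi).
case: (bb psi xi) => // _; rewrite (@integral_segment_cst _ 1 _ +oo) //; last first.
  by move=> s /andP[s0 _]; rewrite gt0_muley // lte_fin invr_gt0 exprn_gt0 ?growth_gt0.
by rewrite mule1 addey.
Qed.

Lemma ode_along_growth_Leb0 : Leb psi = 0 -> ode_along_growth <-> forall xi, bb psi xi = 0%E.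
Proof.
move=> L0; have integrandE t xi : 0 <= t ->
    (\int[lebesgue_measure]_(s in [set s : R | (0 <= s <= t)%R])
       ((growth (Leb psi) n s ^+ n.-1)^-1%:E * bb psi xi) = bb psi xi * t%:E)%E.
  by move=> t0; apply: integral_segment_cst => // s _; rewrite L0 growthL0 expr1n invr1 mul1e.
split=> [ode xi|bb0 t t0 xi]; last by rewrite integrandE // bb0 mul0e adde0 L0 growthL0 mul1r.
have := ode 1 ler01 xi; rewrite integrandE // L0 growthL0 mul1r mule1.
move: (ode_along_growth_fin_num ode xi); case: (bb psi xi) => // a _ /eqP.
rewrite -EFinD eqe => /eqP psiE; congr EFin.
by apply: (addrI (psi xi)); rewrite -psiE addr0.
Qed.

Lemma ode_along_growth_Leb_gt0 : 0 < Leb psi ->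
  ode_along_growth <-> forall xi, bb psi xi = (psi xi / (n%:R * Leb psi))%:E.
Proof.
move=> L_gt0; have n0 : n%:R != 0 :> R by rewrite pnatr_eq0 -lt0n.
have nL0 : n%:R * Leb psi != 0 by apply: mulf_neq0 => //; rewrite gt_eqF.
have integrandE t a : 0 <= t ->
    (\int[lebesgue_measure]_(s in [set s : R | (0 <= s <= t)%R])
       ((growth (Leb psi) n s ^+ n.-1)^-1%:E * a%:E) =
     (n%:R * Leb psi * (growth (Leb psi) n t - 1) * a)%:E)%E.
  by move=> t0; rewrite -integral_growth //; apply: eq_integral => s _; rewrite EFinM.
split=> [ode xi|bbE t t0 xi]; last first.
  by rewrite bbE integrandE // -EFinD; congr EFin; field; rewrite n0 gt_eqF.
have := ode 1 ler01 xi; move: (ode_along_growth_fin_num ode xi); case: (bb psi xi) => // a _.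
rewrite integrandE // -EFinD => /eqP; rewrite eqe => /eqP ode1; congr EFin.
set c1 := growth (Leb psi) n 1 in ode1 *.
have c1_neq1 : c1 - 1 != 0 by rewrite subr_eq0 growth1_neq1.
have : (c1 - 1) * (psi xi - n%:R * Leb psi * a) = 0.
  have -> : (c1 - 1) * (psi xi - n%:R * Leb psi * a) =
      c1 * psi xi - (psi xi + n%:R * Leb psi * (c1 - 1) * a) by ring.
  by rewrite ode1 subrr.
move/eqP; rewrite mulf_eq0 (negPf c1_neq1) /= subr_eq0 => /eqP ->.
by field; rewrite n0 gt_eqF.
Qed.

Theorem invariant_ode_homogeneous :
  invariant_ode bb psi <-> forall xi, bb psi xi = (psi xi / (n%:R * Leb psi))%:E.
Proof.
rewrite invariant_odeE; have [L_gt0|] := ltP 0 (Leb psi).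
  exact: ode_along_growth_Leb_gt0.
(* Leb psi = 0 only arises from junk values of fine; then growth is
   constantly 1 and psi / (n * 0) = 0. *)
move=> L_le0; have L0 : Leb psi = 0 by apply/le_anti; rewrite L_le0 Lebpsi_ge0.
rewrite (ode_along_growth_Leb0 L0) L0 mulr0 invr0.
by under [X in _ <-> X]eq_forall do rewrite mulr0.
Qed.

End homogeneous_ode.

Theorem proposition3p3 (R : realType) (n : nat) (hn : (2 <= n)%N)
    (D : (Sph R n -> R) -> 'rV[R]_n -> Prop)
    (F : (Sph R n -> R) -> 'rV[R]_n -> Sph R n -> R)
    (H : (Sph R n -> R) -> Sph R n -> 'rV[R]_n)
    (nu : (Sph R n -> R) -> probability (Rn R n) R) :
  rules D F H ->
  (forall r, Cplus r -> invariant_prob D F H r (nu r)) ->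
  (forall r, Cplus r -> forall mu : probability (Rn R n) R,
      invariant_prob D F H r mu -> forall A, measurable A -> mu A = nu r A) ->
  assumptionI D F H ->
  forall psi : Sph R n -> R, Cplus psi ->
    (invariant_ode (bbar D F nu) psi <->
     forall xi, bbar D F nu psi xi = (psi xi / (n%:R * Leb psi))%:E).
Proof.
move=> rulesDFH nu_invariant nu_unique scale_invariance psi Cpsi.
apply: invariant_ode_homogeneous => //.
- by apply: leq_trans hn.
- by move=> xi; exact: bbar_ge0 rulesDFH psi xi.
- move=> c xi c_gt0.
  exact: bbar_scale rulesDFH nu_invariant nu_unique scale_invariance psi c Cpsi c_gt0 xi.
Qed.
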